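(* If an unbounded graph matroid family $\mathcal{M}$ has the Whitney property, then it has the Lovász-Yemini property.
   Context: All graphs are finite and simple and have no isolated vertices. A graph matroid family $\mathcal{M}$ assigns to every graph $G$ a matroid $\mathcal{M}(G)$ on $E(G)$ such that (i) every graph isomorphism $V(G)\to V(H)$ induces an isomorphism $\mathcal{M}(G)\to\mathcal{M}(H)$, and (ii) for every subgraph $H$ of $G$, $\mathcal{M}(H)$ is the restriction of $\mathcal{M}(G)$ to $E(H)$. $r(G)$ is the rank of $\mathcal{M}(G)$; $\mathcal{M}$ is unbounded if $r(K_n)$ is unbounded; $G$ is $\mathcal{M}$-rigid if $r(G)=r(K_{V(G)})$. $G$ is $\mathcal{M}$-reconstructible if every matroid isomorphism $\psi:E(G)\to E(H)$ between $\mathcal{M}(G)$ and $\mathcal{M}(H)$, for any graph $H$, is induced by a graph isomorphism $\varphi$ (i.e. $\psi(uv)=\varphi(u)\varphi(v)$). $\mathcal{M}$ has the Whitney property if for some nonnegative integer $c$ every $c$-connected graph is $\mathcal{M}$-reconstructible, and the Lovász-Yemini property if for some nonnegative integer $c$ every $c$-connected graph is $\mathcal{M}$-rigid. *)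

From mathcomp Require Import all_boot.
From mathcomp Require Import finmap.
Set Implicit Arguments.
Unset Strict Implicit.
Unset Printing Implicit Defensive.
Local Open Scope fset_scope.

(* An (undirected) edge uv is stored in normal form (min u v, max u v). *)
Definition edge := (nat * nat)%type.
Definition mkedge (u v : nat) : edge := (minn u v, maxn u v).

(* A finite simple graph without isolated vertices, with vertices in nat,
   is given by its edge set; well-formedness: every edge (u,v) has u < v
   (no loops, normalized). *)
Definition graph := {fset edge}.
Definition wf_graph (G : graph) : Prop := forall e, e \in G -> e.1 < e.2.
Definition verts (G : graph) : {fset nat} :=
  [fset e.1 | e in G] `|` [fset e.2 | e in G].

Definition complete_on (V : {fset nat}) : graph :=
  [fset e | e in [fset mkedge u v | u in V, v in V] & e.1 < e.2].
Definition K_ (n : nat) : graph := complete_on [fset i | i in iota 0 n].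

Definition emap (phi : nat -> nat) (e : edge) : edge := mkedge (phi e.1) (phi e.2).

Definition graph_iso (G H : graph) (phi : nat -> nat) : Prop :=
  {in verts G &, injective phi} /\ [fset emap phi e | e in G] = H.

Definition is_matroid (E : {fset edge}) (I : {fset edge} -> bool) : Prop :=
  [/\ I fset0,
      forall F, I F -> F `<=` E,
      forall F F', I F -> F' `<=` F -> I F' &
      forall F1 F2, I F1 -> I F2 -> #|` F1 | < #|` F2 | ->
        exists2 e, e \in F2 `\` F1 & I (e |` F1)].

Definition graph_matroid_family (M : graph -> {fset edge} -> bool) : Prop :=
  [/\ forall G, wf_graph G -> is_matroid G (M G),
      forall G H phi, wf_graph G -> wf_graph H -> graph_iso G H phi ->
        forall F, F `<=` G -> M G F = M H [fset emap phi e | e in F] &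
      forall G H, wf_graph G -> wf_graph H -> H `<=` G ->
        forall F, M H F = M G F && (F `<=` H)].

Definition rk (M : graph -> {fset edge} -> bool) (G : graph) : nat :=
  \max_(F <- fpowerset G | M G F) #|` F |.

Definition unbounded (M : graph -> {fset edge} -> bool) : Prop :=
  forall k, exists n, k <= rk M (K_ n).

Definition rigid (M : graph -> {fset edge} -> bool) (G : graph) : Prop :=
  rk M G = rk M (complete_on (verts G)).

Definition matroid_iso (M : graph -> {fset edge} -> bool) (G H : graph)
    (psi : edge -> edge) : Prop :=
  [/\ {in G &, injective psi}, [fset psi e | e in G] = H &
      forall F, F `<=` G -> M G F = M H [fset psi e | e in F]].

Definition reconstructible (M : graph -> {fset edge} -> bool) (G : graph) : Prop :=
  forall H psi, wf_graph H -> matroid_iso M G H psi ->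
    exists phi, graph_iso G H phi /\ {in G, forall e, psi e = emap phi e}.

Definition adj_minus (G : graph) (X : {fset nat}) : rel nat :=
  fun x y => [&& mkedge x y \in G, x \notin X & y \notin X].
Definition connected_minus (G : graph) (X : {fset nat}) : Prop :=
  forall u v, u \in verts G `\` X -> v \in verts G `\` X ->
    exists p : seq nat, path (adj_minus G X) u p /\ last u p = v.

(* c-connected (Diestel): more than c vertices, and G - X connected for
   every set X of fewer than c vertices. *)
Definition c_connected (c : nat) (G : graph) : Prop :=
  c < #|` verts G | /\
  forall X : {fset nat}, X `<=` verts G -> #|` X | < c -> connected_minus G X.

Definition whitney_property (M : graph -> {fset edge} -> bool) : Prop :=
  exists c, forall G, wf_graph G -> c_connected c G -> reconstructible M G.

Definition lovasz_yemini_property (M : graph -> {fset edge} -> bool) : Prop :=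
  exists c, forall G, wf_graph G -> c_connected c G -> rigid M G.

From mathcomp Require Import all_boot.
From mathcomp Require Import finmap.
Set Implicit Arguments.
Unset Strict Implicit.
Unset Printing Implicit Defensive.
Local Open Scope fset_scope.

(** Suppose a highly connected graph G is not rigid and let H be a maximal edge
    set with G <= H <= K, K the complete graph on V(G), and rk H < rk K. Every
    edge x of K outside H is then a coloop of H + x. If there are two such edges
    e <> f, exchanging them is a matroid isomorphism M(H + e) -> M(H + f);
    otherwise e is a coloop of M(K), hence by the symmetry of K so is an edge f
    adjacent to e, and exchanging e and f is an automorphism of M(K). In both
    cases the domain contains G, so it is reconstructible and the exchange is
    induced by a vertex map. As G has minimum degree at least 6, each endpoint of
    e has two neighbours along edges fixed by the exchange, so the vertex map
    fixes both endpoints of e, contradicting that the exchange moves e to f. *)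

Definition ends (e : edge) : {fset nat} := [fset e.1; e.2].

Lemma card_ends (e : edge) : #|` ends e| <= 2.
Proof. by rewrite cardfs2; case: (_ != _). Qed.

Lemma mkedge_id (e : edge) : e.1 < e.2 -> mkedge e.1 e.2 = e.
Proof. by case: e => u v /= /ltnW uv; rewrite /mkedge (minn_idPl uv) (maxn_idPr uv). Qed.

Lemma ends_mkedge (u v : nat) : ends (mkedge u v) = [fset u; v].
Proof.
by rewrite /ends /mkedge /=; case: leqP => _; rewrite // fsetUC.
Qed.

Lemma mkedge_ends_neq (u v : nat) (e : edge) : v \notin ends e -> mkedge u v != e.
Proof. by apply: contra => /eqP <-; rewrite ends_mkedge !inE eqxx orbT. Qed.

Lemma emap_mkedge (phi : nat -> nat) (u v : nat) : emap phi (mkedge u v) = mkedge (phi u) (phi v).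
Proof.
by rewrite /emap /mkedge /=; case: leqP => _; rewrite // minnC maxnC.
Qed.

Lemma emapK (phi : nat -> nat) (g : edge) : involutive phi -> g.1 < g.2 ->
  emap phi (emap phi g) = g.
Proof. by move=> phiK g12; rewrite {2}/emap emap_mkedge !phiK mkedge_id. Qed.

Lemma emap_fixed_vertex (phi : nat -> nat) (a y1 y2 : nat) : y1 != y2 ->
  emap phi (mkedge a y1) = mkedge a y1 -> emap phi (mkedge a y2) = mkedge a y2 ->
  phi a = a.
Proof.
have fixed_or y : emap phi (mkedge a y) = mkedge a y -> (phi a == a) || (phi a == y).
  rewrite emap_mkedge => /(congr1 ends); rewrite !ends_mkedge => /fsetP/(_ (phi a)).
  by rewrite !inE eqxx => <-.
move=> y12 /fixed_or/orP[/eqP // | /eqP a1] /fixed_or/orP[/eqP // | /eqP a2].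
by move: y12; rewrite -a1 -a2 eqxx.
Qed.

Definition swap (T : eqType) (a b x : T) : T :=
  if x == a then b else if x == b then a else x.

Section Swap.
Variables (T : eqType) (a b : T).

Lemma swap_l : swap a b a = b.
Proof. by rewrite /swap eqxx. Qed.

Lemma swap_r : swap a b b = a.
Proof. by rewrite /swap eqxx; case: eqP => [->|]. Qed.

Lemma swap_id (x : T) : x != a -> x != b -> swap a b x = x.
Proof. by rewrite /swap => /negbTE-> /negbTE->. Qed.

Lemma swapK : involutive (swap a b).
Proof.
move=> x; case: (eqVneq x a) => [->|xa]; first by rewrite swap_l swap_r.
case: (eqVneq x b) => [->|xb]; first by rewrite swap_r swap_l.
by rewrite !swap_id.
Qed.

Lemma swap_inj : injective (swap a b).
Proof. exact: can_inj swapK. Qed.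

End Swap.

Section SwapImage.
Variables (T : choiceType) (a b : T).

Lemma swap_mem (A : {fset T}) (x : T) : a \in A -> b \in A -> x \in A -> swap a b x \in A.
Proof. by rewrite /swap => aA bA xA; case: ifP => // _; case: ifP. Qed.

Lemma mem_imfset_swap (F : {fset T}) (x : T) : (x \in swap a b @` F) = (swap a b x \in F).
Proof.
apply/imfsetP/idP => [[y yF ->] | sxF]; first by rewrite swapK.
by exists (swap a b x); rewrite ?swapK.
Qed.

Lemma imfset_swap_fixed (F : {fset T}) : a \in F -> b \in F -> swap a b @` F = F.
Proof.
move=> aF bF; apply/fsetP => x; rewrite mem_imfset_swap.
case: (eqVneq x a) => [->|xa]; first by rewrite swap_l aF bF.
case: (eqVneq x b) => [->|xb]; first by rewrite swap_r aF bF.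
by rewrite swap_id // (negbTE xa).
Qed.

Lemma imfset_swapU1 (H : {fset T}) : a \notin H -> b \notin H -> swap a b @` (a |` H) = b |` H.
Proof.
move=> aH bH; apply/fsetP => x; rewrite mem_imfset_swap !in_fset1U.
case: (eqVneq x a) => [->|xa]; first by rewrite swap_l (negbTE aH) (negbTE bH) eq_sym.
case: (eqVneq x b) => [->|xb]; first by rewrite swap_r eqxx.
by rewrite swap_id // (negbTE xa).
Qed.

Lemma imfset_swapD1 (F : {fset T}) : b \notin F `\ a -> (swap a b @` F) `\ b = F `\ a.
Proof.
move=> bFa; apply/fsetP => x; rewrite !in_fsetD1 mem_imfset_swap.
case: (eqVneq x a) => [->|xa]; first by rewrite swap_l eq_sym -in_fsetD1 (negbTE bFa).
case: (eqVneq x b) => [xb|xb]; last by rewrite swap_id.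
by move: xa bFa; rewrite xb in_fsetD1 => -> /negbTE ->.
Qed.

Lemma imfset_swapD2 (F : {fset T}) : (swap a b @` F) `\ a `\ b = F `\ a `\ b.
Proof.
apply/fsetP => x; rewrite !in_fsetD1 mem_imfset_swap.
by case: (eqVneq x b) => //= xb; case: (eqVneq x a) => //= xa; rewrite swap_id.
Qed.

End SwapImage.

Lemma vertsP (G : graph) (x : nat) : reflect (exists2 g, g \in G & x \in ends g) (x \in verts G).
Proof.
rewrite /verts in_fsetU; apply: (iffP orP) => [[]/imfsetP[g /= gG ->]|[g gG]].
- by exists g; rewrite // !inE eqxx.
- by exists g; rewrite // !inE eqxx orbT.
by rewrite !inE => /orP[]/eqP->; [left | right]; apply/imfsetP; exists g.
Qed.

Lemma vertsS (A B : graph) : A `<=` B -> verts A `<=` verts B.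
Proof.
move=> AB; apply/fsubsetP => x /vertsP[g gA xg].
by apply/vertsP; exists g; rewrite ?(fsubsetP AB).
Qed.

Lemma wf_graph_sub (A B : graph) : A `<=` B -> wf_graph B -> wf_graph A.
Proof. by move=> AB wB g /(fsubsetP AB)/wB. Qed.

Lemma in_complete_on (V : {fset nat}) (g : edge) :
  (g \in complete_on V) = [&& g.1 \in V, g.2 \in V & g.1 < g.2].
Proof.
rewrite /complete_on in_fset /=; apply/andP/and3P => [[/imfset2P[u uV [v vV ->]]] /=|].
  by case: (leqP u v) => _ uv; split.
case=> g1 g2 g12; split=> //; apply/imfset2P.
by exists g.1 => //; exists g.2; rewrite ?mkedge_id.
Qed.

Lemma wf_complete_on (V : {fset nat}) : wf_graph (complete_on V).
Proof. by move=> g; rewrite in_complete_on => /and3P[]. Qed.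

Lemma ends_complete_on (V : {fset nat}) (g : edge) : g \in complete_on V -> ends g `<=` V.
Proof.
by rewrite in_complete_on => /and3P[g1 g2 _]; apply/fsubsetP => x; rewrite !inE => /orP[]/eqP->.
Qed.

Lemma mkedge_complete_on (V : {fset nat}) (u v : nat) : u \in V -> v \in V -> u != v ->
  mkedge u v \in complete_on V.
Proof.
by move=> uV vV; rewrite in_complete_on /mkedge /=; case: (ltngtP u v) => // uv _; apply/and3P.
Qed.

Lemma sub_complete_on_verts (G : graph) : wf_graph G -> G `<=` complete_on (verts G).
Proof.
move=> wG; apply/fsubsetP => g gG; rewrite in_complete_on wG // andbT.
by apply/andP; split; apply/vertsP; exists g; rewrite // !inE eqxx ?orbT.
Qed.

Lemma verts_complete_on (V : {fset nat}) : verts (complete_on V) `<=` V.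
Proof.
by apply/fsubsetP => x /vertsP[g /ends_complete_on/fsubsetP gV /gV].
Qed.

Lemma verts_between (G A : graph) : G `<=` A -> A `<=` complete_on (verts G) -> verts A = verts G.
Proof.
move=> GA AK; apply/eqP; rewrite eqEfsubset (vertsS GA) andbT.
exact: fsubset_trans (vertsS AK) (verts_complete_on _).
Qed.

Lemma c_connected_le (c c' : nat) (G : graph) : c <= c' -> c_connected c' G -> c_connected c G.
Proof.
move=> cc' [Vc' conn]; split=> [|X XG Xc]; first exact: leq_ltn_trans Vc'.
by apply: conn; rewrite ?(leq_trans Xc).
Qed.

Lemma c_connected_super (c : nat) (G A : graph) : G `<=` A -> verts A = verts G ->
  c_connected c G -> c_connected c A.
Proof.
move=> GA VA [Vc conn]; rewrite /c_connected /connected_minus VA.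
split=> // X XG Xc u v uX vX.
have [p [pth plast]] := conn X XG Xc u v uX vX.
exists p; split=> //; apply: sub_path pth => x y /and3P[xyG xX yX].
by rewrite /adj_minus (fsubsetP GA) ?xX.
Qed.

Lemma c_connected_nbr (k : nat) (G : graph) (a : nat) (S : {fset nat}) :
  wf_graph G -> c_connected k G -> a \in verts G -> #|` S| < k ->
  exists2 y, y \notin S & mkedge a y \in G.
Proof.
move=> wG [Vk conn] aG Sk.
pose X := (S `&` verts G) `\ a.
have XS : #|` X| <= #|` S|.
  exact: leq_trans (fsubset_leq_card (fsubsetDl _ _)) (fsubset_leq_card (fsubsetIl _ _)).
have XG : X `<=` verts G := fsubset_trans (fsubsetDl _ _) (fsubsetIr _ _).
have [v /fsetDP[vG vaX]] : exists v, v \in verts G `\` (a |` X).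
  apply/fset0Pn; rewrite -cardfs_gt0 cardfsD subn_gt0.
  apply: leq_ltn_trans (fsubset_leq_card (fsubsetIr _ _)) _.
  rewrite cardfsU1; apply: leq_ltn_trans (leq_add (leq_b1 _) XS) _.
  exact: leq_ltn_trans Sk Vk.
have aX : a \in verts G `\` X by rewrite in_fsetD in_fsetD1 eqxx.
have vX : v \in verts G `\` X.
  by rewrite in_fsetD vG andbT; apply: contra vaX => vX; rewrite in_fset1U vX orbT.
have [[|y p] [/= pth plast]] := conn X XG (leq_ltn_trans XS Sk) a v aX vX.
  by move: vaX; rewrite -plast fset1U1.
move: pth => /andP[/and3P[ay _ yX] _]; exists y => //; apply: contra yX => yS.
rewrite in_fsetD1 in_fsetI yS andTb; apply/andP; split.
  by apply: contraTneq (wG _ ay) => ->; rewrite /mkedge minnn maxnn ltnn.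
by apply/vertsP; exists (mkedge a y); rewrite // ends_mkedge !inE eqxx orbT.
Qed.

Lemma c_connected_two_nbrs (k : nat) (G : graph) (a : nat) (S : {fset nat}) :
  wf_graph G -> c_connected k G -> a \in verts G -> #|` S|.+1 < k ->
  exists y1 y2, [/\ y1 != y2, y1 \notin S, y2 \notin S, mkedge a y1 \in G & mkedge a y2 \in G].
Proof.
move=> wG cG aG Sk.
have [y1 y1S ay1] := c_connected_nbr wG cG aG (ltnW Sk).
have [|y2] := c_connected_nbr (S := y1 |` S) wG cG aG.
  by rewrite cardfsU1; apply: leq_ltn_trans Sk; apply: leq_add (leq_b1 _) (leqnn _).
rewrite in_fset1U negb_or => /andP[y21 y2S] ay2.
by exists y1, y2; split; rewrite // eq_sym.
Qed.

Lemma fsubset_maximal (T : choiceType) (P : pred {fset T}) (K G : {fset T}) :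
  G `<=` K -> P G ->
  exists H, [/\ G `<=` H, H `<=` K, P H & forall x, x \in K `\` H -> ~~ P (x |` H)].
Proof.
move: {2}_.+1 (ltnSn #|` K `\` G|) => n.
elim: n G => // n IHn G KGn GK PG.
have [/hasP[x xKG PxG] | /hasPn maxG] := boolP (has (fun x => P (x |` G)) (K `\` G)).
  have [||H [xGH HK PH maxH]] := IHn (x |` G) _ _ PxG.
  - by rewrite (cardfsD1 x (K `\` G)) xKG fsetDDl fsetUC add1n ltnS in KGn.
  - by rewrite fsubUset fsub1set GK andbT; case/fsetDP: xKG.
  by exists H; split=> //; apply: fsubset_trans xGH; apply: fsubsetU1.
by exists G.
Qed.

Section GraphMatroidFamily.
Variable M : graph -> {fset edge} -> bool.
Hypothesis HM : graph_matroid_family M.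

Lemma indep_sub (A : graph) (F : {fset edge}) : wf_graph A -> M A F -> F `<=` A.
Proof. by move=> wA MF; case: HM => /(_ A wA)[_ sub _ _] _ _; apply: sub. Qed.

Lemma indepS (A : graph) (F F' : {fset edge}) : wf_graph A -> F' `<=` F -> M A F -> M A F'.
Proof. by move=> wA F'F MF; case: HM => /(_ A wA)[_ _ hered _] _ _; apply: hered MF F'F. Qed.

Lemma indep_restr (A H : graph) (F : {fset edge}) :
  wf_graph A -> wf_graph H -> H `<=` A -> F `<=` H -> M H F = M A F.
Proof. by move=> wA wH HA FH; case: HM => _ _ /(_ A H wA wH HA F)->; rewrite FH andbT. Qed.

Lemma indep_iso (A B : graph) (phi : nat -> nat) (F : {fset edge}) :
  wf_graph A -> wf_graph B -> graph_iso A B phi -> F `<=` A ->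
  M A F = M B [fset emap phi e | e in F].
Proof. by move=> wA wB iso FA; case: HM => _ /(_ A B phi wA wB iso F FA). Qed.

Lemma indep_augment (A : graph) (F C : {fset edge}) : wf_graph A -> M A F -> M A C ->
  exists J, [/\ M A J, F `<=` J & #|` C| <= #|` J|].
Proof.
move=> wA; case: HM => /(_ A wA)[_ _ _ exchange] _ _.
move: {2}_.+1 (ltnSn (#|` C| - #|` F|)) => n.
elim: n F => // n IHn F CFn MF MC.
have [CF | FC] := leqP #|` C| #|` F|; first by exists F.
have [x /fsetDP[_ xF] MxF] := exchange _ _ MF MC FC.
have [|J [MJ xFJ CJ]] := IHn (x |` F) _ MxF MC.
  by rewrite cardfsU1 xF add1n subnS -ltnS prednK ?subn_gt0.
by exists J; split=> //; apply: fsubset_trans (fsubsetU1 x F) xFJ.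
Qed.

Lemma card_le_rk (A : graph) (F : {fset edge}) : F `<=` A -> M A F -> #|` F| <= rk M A.
Proof. by move=> FA MF; apply: (leq_bigmax_seq F); rewrite ?fpowersetE. Qed.

Lemma rk_gt (A : graph) (k : nat) : k < rk M A -> exists F, [/\ F `<=` A, M A F & k < #|` F|].
Proof.
move=> k_lt; have /hasP[F] : has (fun F => M A F && (k < #|` F|)) (fpowerset A).
  apply: contraLR k_lt => /hasPn noF; rewrite -leqNgt; apply/bigmax_leqP_seq => F FA MF.
  by move: (noF F FA); rewrite MF -leqNgt.
by rewrite fpowersetE => FA /andP[MF kF]; exists F.
Qed.

Lemma rkS (A H : graph) : wf_graph A -> wf_graph H -> H `<=` A -> rk M H <= rk M A.
Proof.
move=> wA wH HA; apply/bigmax_leqP_seq => F; rewrite fpowersetE => FH MF.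
by rewrite card_le_rk ?(fsubset_trans FH) // -(indep_restr wA wH).
Qed.

(* For [e \in A] this says that [e] lies in every basis of M(A). *)
Definition coloop (A : graph) (e : edge) : Prop :=
  forall F, F `<=` A -> M A F = M A (F `\ e).

Lemma coloop_rk (A : graph) (e : edge) : wf_graph A -> rk M (A `\ e) < rk M A -> coloop A e.
Proof.
move=> wA rk_lt F FA; apply/idP/idP => [|MFe]; first exact/indepS/fsubsetDl.
have wAe : wf_graph (A `\ e) := wf_graph_sub (fsubsetDl _ _) wA.
have [C [_ MC rkC]] := rk_gt rk_lt.
have [J [MJ FeJ CJ]] := indep_augment wA MFe MC.
have eJ : e \in J.
  apply: contraTT rkC => eJ; rewrite -leqNgt (leq_trans CJ) // card_le_rk //.
    by rewrite fsubsetD1 eJ indep_sub.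
  by rewrite (indep_restr wA wAe) ?fsubsetDl // fsubsetD1 eJ indep_sub.
apply: indepS MJ => //; apply/fsubsetP => x xF.
by case: (eqVneq x e) => [-> // | xe]; apply: (fsubsetP FeJ); rewrite in_fsetD1 xe.
Qed.

Lemma coloopD2 (A : graph) (e f : edge) (F : {fset edge}) : coloop A e -> coloop A f -> F `<=` A ->
  M A F = M A (F `\ e `\ f).
Proof. by move=> ce cf FA; rewrite ce // cf // (fsubset_trans (fsubsetDl _ _)). Qed.

Lemma swap_coloop_iso (H : graph) (e f : edge) : wf_graph (e |` H) -> wf_graph (f |` H) ->
  e \notin H -> f \notin H -> coloop (e |` H) e -> coloop (f |` H) f ->
  matroid_iso M (e |` H) (f |` H) (swap e f).
Proof.
move=> wA wB eH fH ce cf; have wH := wf_graph_sub (fsubsetU1 e H) wA.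
split; [by move=> ? ? _ _ /swap_inj | exact: imfset_swapU1 |] => F FA.
have FeH : F `\ e `<=` H.
  by apply/fsubsetP => x /fsetD1P[xe /(fsubsetP FA)]; rewrite in_fset1U (negbTE xe).
rewrite ce // cf; last by rewrite -(imfset_swapU1 eH fH); apply/subset_imfset/fsubsetP.
rewrite imfset_swapD1; last exact: contra (fsubsetP FeH f) fH.
by rewrite -(indep_restr wA wH) ?fsubsetU1 // -(indep_restr wB wH) ?fsubsetU1.
Qed.

Lemma swap_coloops_iso (K : graph) (e f : edge) : e \in K -> f \in K -> coloop K e -> coloop K f ->
  matroid_iso M K K (swap e f).
Proof.
move=> eK fK ce cf.
split; [by move=> ? ? _ _ /swap_inj | exact: imfset_swap_fixed |] => F FK.
rewrite (coloopD2 ce cf) // [RHS](coloopD2 ce cf) ?imfset_swapD2 //.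
by rewrite -(imfset_swap_fixed eK fK); apply/subset_imfset/fsubsetP.
Qed.

Section CompleteOnInvolution.
Variables (V : {fset nat}) (phi : nat -> nat).
Hypotheses (phiK : involutive phi) (phiV : {in V, forall x, phi x \in V}).
Local Notation K := (complete_on V).

Lemma emap_complete_on (g : edge) : g \in K -> emap phi g \in K.
Proof.
rewrite in_complete_on => /and3P[g1 g2 g12].
by rewrite mkedge_complete_on ?phiV // (inj_eq (can_inj phiK)) ltn_eqF.
Qed.

Lemma graph_iso_complete_on : graph_iso K K phi.
Proof.
split; first by move=> x y _ _ /(can_inj phiK).
apply/fsetP => g; apply/imfsetP/idP => [[h hK ->] | gK]; first exact: emap_complete_on.
exists (emap phi g); first exact: emap_complete_on.
by rewrite emapK // (wf_complete_on gK).
Qed.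

Lemma coloop_emap (e : edge) : e \in K -> coloop K e -> coloop K (emap phi e).
Proof.
move=> eK ce F FK; have wK := @wf_complete_on V.
have emapKK g : g \in K -> emap phi (emap phi g) = g by move/wK; apply: emapK.
have image_sub F' : F' `<=` K -> emap phi @` F' `<=` K.
  by move=> F'K; apply/fsubsetP => _ /imfsetP[g /(fsubsetP F'K) gK ->]; apply: emap_complete_on.
have image_D1 : emap phi @` (F `\ emap phi e) = (emap phi @` F) `\ e.
  apply/fsetP => x; rewrite in_fsetD1; apply/imfsetP/andP => [[g /fsetD1P[ge gF] ->] | ].
    split; last exact: in_imfset.
    by apply: contra_neq ge => <-; rewrite emapKK // (fsubsetP FK).
  case=> xe /imfsetP[g gF xg]; exists g => //; rewrite in_fsetD1 gF andbT.
  by apply: contra_neq xe => ge; rewrite xg ge emapKK.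
rewrite (indep_iso wK wK graph_iso_complete_on FK).
rewrite (indep_iso wK wK graph_iso_complete_on (fsubset_trans (fsubsetDl _ _) FK)).
by rewrite image_D1 -ce // image_sub.
Qed.

End CompleteOnInvolution.

Lemma complete_on_second_coloop (V : {fset nat}) (e : edge) : 2 < #|` V| -> e \in complete_on V ->
  coloop (complete_on V) e ->
  exists f, [/\ f \in complete_on V, f != e & coloop (complete_on V) f].
Proof.
move=> V3 eK ce; have := eK; rewrite in_complete_on => /and3P[e1V e2V e12].
have [w /fsetDP[wV we]] : exists w, w \in V `\` ends e.
  apply/fset0Pn; rewrite -cardfs_gt0 cardfsD subn_gt0.
  exact: leq_ltn_trans (fsubset_leq_card (fsubsetIr _ _)) (leq_ltn_trans (card_ends e) V3).
have swapV : {in V, forall x, swap e.2 w x \in V} by move=> x; apply: swap_mem.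
exists (emap (swap e.2 w) e); split.
- exact: emap_complete_on (@swapK _ e.2 w) swapV _ eK.
- rewrite /emap swap_l swap_id ?(ltn_eqF e12) //; first exact: mkedge_ends_neq.
  by apply: contraNneq we => <-; rewrite !inE eqxx.
- exact: coloop_emap (@swapK _ e.2 w) swapV _ eK ce.
Qed.

End GraphMatroidFamily.

Section Reconstruction.
Variables (M : graph -> {fset edge} -> bool) (c : nat).
Hypothesis HM : graph_matroid_family M.
Hypothesis HW : forall A, wf_graph A -> c_connected c A -> reconstructible M A.
Variable G : graph.
Hypotheses (wG : wf_graph G) (cG : c_connected (c + 6) G).
Local Notation K := (complete_on (verts G)).

Let wK : wf_graph K := @wf_complete_on _.

Lemma swap_iso_not_induced (A B : graph) (e f : edge) : G `<=` A -> A `<=` K ->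
  wf_graph B -> e \in A -> e != f -> ~ matroid_iso M A B (swap e f).
Proof.
move=> GA AK wB eA ef iso.
have wA : wf_graph A := wf_graph_sub AK wK.
have cA : c_connected c A.
  exact: c_connected_super GA (verts_between GA AK) (c_connected_le (leq_addr 6 c) cG).
have [phi [_ induced]] := HW wA cA wB iso.
have fixed_end a : a \in ends e -> phi a = a.
  move=> ae; have aG : a \in verts G.
    exact: (fsubsetP (ends_complete_on (fsubsetP AK e eA))).
  have few_ends : #|` ends e `|` ends f|.+1 < c + 6.
    apply: leq_trans _ (leq_addl c 6); rewrite cardfsU !ltnS.
    exact: leq_trans (leq_subr _ _) (leq_add (card_ends e) (card_ends f)).
  have [y1 [y2 [y12 y1S y2S ay1 ay2]]] := c_connected_two_nbrs wG cG aG few_ends.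
  have fixed y : y \notin ends e `|` ends f -> mkedge a y \in G ->
      emap phi (mkedge a y) = mkedge a y.
    rewrite in_fsetU negb_or => /andP[ye yf] ayG.
    by rewrite -induced ?(fsubsetP GA) // swap_id // mkedge_ends_neq.
  exact: emap_fixed_vertex y12 (fixed y1 y1S ay1) (fixed y2 y2S ay2).
move/eqP: ef; apply; move: (induced e eA).
by rewrite swap_l /emap !fixed_end ?inE ?eqxx ?orbT // mkedge_id ?wA.
Qed.

Lemma coloop_extensions_contra (H : graph) (e f : edge) : G `<=` H -> H `<=` K ->
  e \in K `\` H -> f \in K `\` H -> e != f ->
  rk M H < rk M (e |` H) -> rk M H < rk M (f |` H) -> False.
Proof.
move=> GH HK eKH fKH ef rk_e rk_f.
have UHK x : x \in K `\` H -> x |` H `<=` K.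
  by case/fsetDP=> xK _; rewrite fsubUset fsub1set xK.
have wU x : x \in K `\` H -> wf_graph (x |` H) by move/UHK/wf_graph_sub; apply.
have coloopU1 x : x \in K `\` H -> rk M H < rk M (x |` H) -> coloop M (x |` H) x.
  move=> xKH rk_x; apply: (coloop_rk HM (wU x xKH)).
  by case/fsetDP: xKH => _ /fsetU1K->.
move: (eKH) (fKH) => /fsetDP[_ eH] /fsetDP[_ fH].
have iso := swap_coloop_iso HM (wU e eKH) (wU f fKH) eH fH
  (coloopU1 e eKH rk_e) (coloopU1 f fKH rk_f).
exact: (swap_iso_not_induced (fsubset_trans GH (fsubsetU1 e H)) (UHK e eKH)
  (wU f fKH) (fset1U1 e H) ef iso).
Qed.

Lemma complete_coloop_contra (e : edge) : e \in K -> rk M (K `\ e) < rk M K -> False.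
Proof.
move=> eK rk_e; have ce := coloop_rk HM wK rk_e.
have V3 : 2 < #|` verts G| := leq_ltn_trans (leq_trans (isT : 2 <= 6) (leq_addl c 6)) cG.1.
have [f [fK fe cf]] := complete_on_second_coloop HM V3 eK ce.
have ef : e != f by rewrite eq_sym.
exact: (swap_iso_not_induced (sub_complete_on_verts wG) (fsubset_refl K) wK eK ef
  (swap_coloops_iso eK fK ce cf)).
Qed.

End Reconstruction.

Theorem lemma3p2 (M : graph -> {fset edge} -> bool) :
  graph_matroid_family M -> unbounded M -> whitney_property M ->
  lovasz_yemini_property M.
Proof.
move=> HM _ [c HW]; exists (c + 6)%N => G wG cG.
set K := complete_on (verts G); have wK : wf_graph K := @wf_complete_on _.
have GK : G `<=` K := sub_complete_on_verts wG.
apply/eqP; rewrite eqn_leq (rkS HM wK wG GK) leqNgt; apply/negP => rkGK.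
have [H [GH HK rkHK maxH]] := fsubset_maximal (P := fun H => rk M H < rk M K) GK rkGK.
have wH : wf_graph H := wf_graph_sub HK wK.
have rk_ext x : x \in K `\` H -> rk M H < rk M (x |` H).
  by move=> xKH; apply: leq_trans rkHK _; rewrite leqNgt; apply: maxH.
have [e eKH] : exists e, e \in K `\` H.
  apply/fset0Pn; apply: contraTneq rkHK => /eqP; rewrite fsetD_eq0 => KH.
  by rewrite -leqNgt (rkS HM wH wK KH).
have [/hasP[f fKH fe] | /hasPn only_e] := boolP (has (predC1 e) (K `\` H)).
  apply: (coloop_extensions_contra HM HW wG cG GH HK eKH fKH _ (rk_ext e eKH) (rk_ext f fKH)).
  by rewrite eq_sym.
have KeH : K `\ e `<=` H.
  apply/fsubsetP => x /fsetD1P[xe xK]; apply: contraTT xe => xH.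
  by apply: only_e; rewrite in_fsetD xH.
have /fsetDP[eK _] := eKH.
apply: (complete_coloop_contra HM HW wG cG eK).
exact: leq_ltn_trans (rkS HM wH (wf_graph_sub (fsubsetDl K _) wK) KeH) rkHK.
Qed.
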